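(* Let $V\in\mathcal{V}$, $\epsilon,c,c_1,c_2\in(0,\mathcal{L}_V(0))$, and $\alpha=\sqrt{\tau_V(c)\lambda_V(c)}$. Then \[\frac{\alpha}{\alpha+A}\,T_V\Big(c+\frac{A+\alpha}{Ae^{A\alpha}}\Big)\le\tau_V(c)\le T_V\Big(\frac{c}{1+c}\Big)\quad\forall A>0,\] and \[T_V\big(c_1+c_2e^{-T_V(\epsilon)\lambda_V(c_1)}+2\epsilon e^{-B}\big)\le T_V(\epsilon)+\frac{2B}{\lambda_V(c_2)}\quad\forall B>0.\] In particular, \[\tau_V(2\delta)\le T_V(\delta)\le\frac{6}{\delta^2}\tau_V(\delta/2)\quad\text{for all }0<\delta<\tfrac12(\mathcal{L}_V(0)\wedge1).\]
   Context: $\mathcal{V}$ is the class of non-decreasing right-continuous $V:(0,\infty)\to\mathbb{R}$ with $\lim_{\lambda\to0^+}V(\lambda)=0$, $\lim_{\lambda\to\infty}V(\lambda)<\infty$; $\mathcal{L}_V(t)=\int_{(0,\infty)}e^{-t\lambda}dV(\lambda)$. $T_V(\epsilon)=\min\{t\ge0:\mathcal{L}_V(t)\le\epsilon\}$ (with $T_V(\epsilon)=0$ if $\mathcal{L}_V(0)\le\epsilon$). For $c\in(0,\mathcal{L}_V(0))$: $\lambda_V(c)=\inf\{\lambda:V(\lambda)>c\}$, $\tau_V(c)=\sup_{\lambda\ge\lambda_V(c)}\lambda^{-1}\log(1+V(\lambda))$. $a\wedge b=\min\{a,b\}$. *)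

From Stdlib Require Import Reals Lra ClassicalEpsilon.
Open Scope R_scope.

(* The class 𝒱: non-decreasing, right-continuous V on (0,∞),
   V(0+) = 0, finite limit at ∞. Values of V outside (0,∞) are irrelevant. *)
Definition in_classV (V : R -> R) : Prop :=
  (forall x y, 0 < x -> x <= y -> V x <= V y) /\
  (forall x, 0 < x -> forall e, 0 < e -> exists d, 0 < d /\
       forall y, x <= y < x + d -> Rabs (V y - V x) < e) /\
  (forall e, 0 < e -> exists d, 0 < d /\ forall y, 0 < y < d -> Rabs (V y) < e) /\
  (exists L, forall e, 0 < e -> exists M, forall y, M < y -> Rabs (V y - L) < e).

Fixpoint rs_sum (f V : R -> R) (p xi : nat -> R) (n : nat) : R :=
  match n with
  | O => 0
  | S m => rs_sum f V p xi m + f (xi m) * (V (p (S m)) - V (p m))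
  end.

Definition tagged_partition (a b : R) (n : nat) (p xi : nat -> R) : Prop :=
  p O = a /\ p n = b /\
  (forall k, (k < n)%nat -> p k < p (S k) /\ p k <= xi k <= p (S k)).

Definition mesh_lt (n : nat) (p : nat -> R) (d : R) : Prop :=
  forall k, (k < n)%nat -> p (S k) - p k < d.

(* I is the Riemann–Stieltjes integral of f w.r.t. V on [a,b]
   (for right-continuous V this is the integral over (a,b] w.r.t. dV). *)
Definition is_RS_integral (f V : R -> R) (a b I : R) : Prop :=
  forall e, 0 < e -> exists d, 0 < d /\
    forall n p xi, tagged_partition a b n p xi -> mesh_lt n p d ->
      Rabs (rs_sum f V p xi n - I) < e.

(* I is the Lebesgue–Stieltjes integral of f over (0,∞) w.r.t. dV,
   obtained as the limit of integrals over (a,b], a -> 0+, b -> ∞. *)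
Definition is_LS_integral (f V : R -> R) (I : R) : Prop :=
  forall e, 0 < e -> exists a0 b0, 0 < a0 /\
    forall a b, 0 < a < a0 -> b0 < b ->
      exists J, is_RS_integral f V a b J /\ Rabs (J - I) < e.

Definition LapV (V : R -> R) (t : R) : R :=
  epsilon (inhabits 0) (fun I => is_LS_integral (fun l => exp (- (t * l))) V I).

Definition TV (V : R -> R) (eps : R) : R :=
  epsilon (inhabits 0) (fun t => 0 <= t /\ LapV V t <= eps /\
     forall s, 0 <= s -> LapV V s <= eps -> t <= s).

Definition is_inf (S : R -> Prop) (m : R) : Prop :=
  (forall x, S x -> m <= x) /\ (forall m', (forall x, S x -> m' <= x) -> m' <= m).
Definition is_sup (S : R -> Prop) (m : R) : Prop :=
  (forall x, S x -> x <= m) /\ (forall m', (forall x, S x -> x <= m') -> m <= m').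

Definition lamV (V : R -> R) (c : R) : R :=
  epsilon (inhabits 0) (is_inf (fun l => 0 < l /\ c < V l)).

Definition tauV (V : R -> R) (c : R) : R :=
  epsilon (inhabits 0)
    (is_sup (fun y => exists l, lamV V c <= l /\ 0 < l /\ y = ln (1 + V l) / l)).

(* Everything rests on Darboux bounds for L_V(t): for a partition a = p_0 <= ... <= p_n = b of an
   interval in (0, oo), with dV_k = V p_(k+1) - V p_k,
     sum_k e^{-t p_(k+1)} dV_k <= L_V(t) <= V a + sum_k e^{-t p_k} dV_k + V(oo) - V b.
   Taking a one-cell partition of (0, l] gives e^{-tl} V(l) <= L_V(t), hence tau_V(c) <= T_V(c/(1+c)).
   For the upper bounds on T_V one bounds L_V from above on fine grids starting just below a
   threshold lambda_V(c): the mass of dV below lambda_V(c) is at most c; above it V(l) <= e^{tau_V(c) l},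
   and summation by parts gives L_V(tau_V(c) + u) <= c + (tau_V(c) + u)/u e^{-u lambda_V(c)}, which
   with u = tau_V(c) A / alpha is the first inequality. For the third one, at time
   T_V(eps) + 2B/lambda_V(c_2) the mass of dV below lambda_V(c_1) contributes at most c_1, the mass
   between the two thresholds at most c_2 e^{-T_V(eps) lambda_V(c_1)}, and beyond lambda_V(c_2) the
   extra factor e^{-2B l / lambda_V(c_2)} <= e^{-2B} compares the grid sum with L_V(T_V(eps)) <= eps.
   The last pair follows with c = 2 delta, resp. c = delta/2 and A = (6/delta^2 - 1) alpha, using
   alpha^2 >= log(1 + c) >= c/(1 + c). *)

From Stdlib Require Import Reals Lra Lia ClassicalEpsilon.
Open Scope R_scope.

Lemma Rdiv_le_0_compat x y : 0 <= x -> 0 < y -> 0 <= x / y.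
Proof. intros. apply Rmult_le_pos; [|apply Rlt_le, Rinv_0_lt_compat]; auto. Qed.

Lemma div_add_1_bounds x : 0 <= x -> 0 <= x / (x + 1) <= 1.
Proof.
  intros Hx. split; [apply Rdiv_le_0_compat; lra|].
  apply (Rmult_le_reg_r (x + 1)); [lra|]. replace (x / (x + 1) * (x + 1)) with x by (field; lra). lra.
Qed.

Lemma exp_le_compat x y : x <= y -> exp x <= exp y.
Proof. intros [H| ->]; [left; apply exp_increasing|]; lra. Qed.

Lemma ln_le_compat x y : 0 < x -> x <= y -> ln x <= ln y.
Proof. intros Hx [H| ->]; [left; apply ln_increasing|]; lra. Qed.

Lemma exp_opp_le_1 x : 0 <= x -> exp (- x) <= 1.
Proof. intros H. rewrite <- exp_0. apply exp_le_compat. lra. Qed.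

Lemma exp_opp_sub_le x y : 0 <= x <= y -> exp (- x) - exp (- y) <= y - x.
Proof.
  intros [H1 H2].
  replace (- y) with (- x + - (y - x)) by ring. rewrite exp_plus.
  pose proof (exp_ineq1_le (- (y - x))). pose proof (exp_opp_le_1 x H1).
  pose proof (exp_pos (- x)). nra.
Qed.

Lemma exp_sub_1_le x : exp x - 1 <= x * exp x.
Proof.
  pose proof (exp_ineq1_le (- x)). pose proof (exp_pos x).
  assert (exp (- x) * exp x = 1) by (rewrite <- exp_plus, Rplus_opp_l; apply exp_0).
  nra.
Qed.

Lemma div_1_add_le_ln_1_add c : 0 < c -> c / (1 + c) <= ln (1 + c).
Proof.
  intros Hc. pose proof (exp_ineq1_le (- ln (1 + c))). rewrite exp_Ropp, exp_ln in H by lra.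
  assert (c / (1 + c) = 1 - / (1 + c)) by (field; lra). lra.
Qed.

Lemma exp_opp_mul_le e M x : 0 < e -> 0 <= M -> M / e <= x -> exp (- x) * M <= e.
Proof.
  intros He HM Hx. pose proof (exp_ineq1_le x). pose proof (exp_pos x).
  assert (HMx : M <= e * x) by (apply (Rmult_le_compat_r e) in Hx; [|lra];
    replace (M / e * e) with M in Hx by (field; lra); lra).
  rewrite exp_Ropp. apply (Rmult_le_reg_r (exp x)); auto.
  rewrite Rmult_assoc, (Rmult_comm M), <- Rmult_assoc, Rinv_l by lra. nra.
Qed.

Lemma exists_step_exp_le r k m : 0 <= r -> 0 < k -> 0 < m ->
  exists h, 0 < h <= m /\ exp (r * h) <= 1 + k.
Proof.
  intros Hr Hk Hm. assert (Hl : 0 < ln (1 + k)) by (rewrite <- ln_1; apply ln_increasing; lra).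
  assert (Hh0 : 0 < ln (1 + k) / (r + 1)) by (apply Rdiv_lt_0_compat; lra).
  pose proof (Rmin_l (ln (1 + k) / (r + 1)) m). pose proof (Rmin_r (ln (1 + k) / (r + 1)) m).
  set (h := Rmin (ln (1 + k) / (r + 1)) m) in *.
  exists h. split; [split; [apply Rmin_pos|]; auto|].
  rewrite <- (exp_ln (1 + k)) by lra. apply exp_le_compat.
  replace (ln (1 + k)) with ((r + 1) * (ln (1 + k) / (r + 1))) by (field; lra). nra.
Qed.

Lemma exp_shift_le t u lam h e : 0 < t -> 0 < u -> 0 <= lam -> 0 < e ->
  exp ((t + u) * h) <= 1 + e * u / (4 * (t + 1)) ->
  t * exp (t * h) / u * exp (- (u * (lam - h))) <= t / u * exp (- (u * lam)) + e / 4.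
Proof.
  intros Ht Hu Hlam He Heh. set (kap := e * u / (4 * (t + 1))) in Heh.
  assert (Eexp : exp (t * h) * exp (- (u * (lam - h))) = exp (- (u * lam)) * exp ((t + u) * h))
    by (rewrite <- !exp_plus; f_equal; ring).
  replace (t * exp (t * h) / u * exp (- (u * (lam - h))))
    with (t / u * exp (- (u * lam)) * exp ((t + u) * h))
    by (transitivity (t / u * (exp (t * h) * exp (- (u * (lam - h)))));
        [rewrite Eexp; ring|field; lra]).
  pose proof (exp_opp_le_1 (u * lam) ltac:(nra)). pose proof (exp_pos (- (u * lam))).
  assert (Htu : 0 <= t / u) by (apply Rdiv_le_0_compat; lra).
  assert (Htk : t / u * kap = e / 4 * (t / (t + 1))) by (unfold kap; field; lra).
  pose proof (div_add_1_bounds t ltac:(lra)).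
  assert (Hw : 0 <= e / 4 * (t / (t + 1)) <= e / 4) by nra.
  assert (exp (- (u * lam)) * (t / u * kap) <= e / 4) by nra.
  assert (t / u * exp (- (u * lam)) * exp ((t + u) * h) <= t / u * exp (- (u * lam)) * (1 + kap))
    by (apply Rmult_le_compat_l; nra).
  nra.
Qed.

Lemma INR_mul_unbounded x0 h x : 0 < h -> exists N : nat, x < x0 + INR N * h.
Proof.
  intros Hh. destruct (INR_unbounded ((x - x0) / h)) as [N HN]. exists N.
  apply (Rmult_lt_compat_r h) in HN; auto.
  replace ((x - x0) / h * h) with (x - x0) in HN by (field; lra). lra.
Qed.

Fixpoint cell_sum (w : R -> R -> R) (p : nat -> R) (n : nat) : R :=
  match n with O => 0 | S m => cell_sum w p m + w (p m) (p (S m)) end.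

(* Unlike [tagged_partition], the points may repeat. *)
Definition partition (a b : R) (n : nat) (p : nat -> R) : Prop :=
  p O = a /\ p n = b /\ forall k, (k < n)%nat -> p k <= p (S k).

Lemma cell_sum_ext w p q n :
  (forall k, (k <= n)%nat -> p k = q k) -> cell_sum w p n = cell_sum w q n.
Proof.
  induction n; intros H; simpl; auto.
  rewrite IHn by (intros; apply H; lia). rewrite (H n), (H (S n)) by lia. reflexivity.
Qed.

Lemma cell_sum_le w1 w2 p n :
  (forall k, (k < n)%nat -> w1 (p k) (p (S k)) <= w2 (p k) (p (S k))) ->
  cell_sum w1 p n <= cell_sum w2 p n.
Proof.
  induction n; intros H; simpl. lra.
  pose proof (H n ltac:(lia)). pose proof (IHn ltac:(intros; apply H; lia)). lra.
Qed.

Lemma cell_sum_nonneg w p n :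
  (forall k, (k < n)%nat -> 0 <= w (p k) (p (S k))) -> 0 <= cell_sum w p n.
Proof.
  induction n; intros H; simpl. lra.
  pose proof (H n ltac:(lia)). pose proof (IHn ltac:(intros; apply H; lia)). lra.
Qed.

Lemma cell_sum_scal K w p n :
  cell_sum (fun x y => K * w x y) p n = K * cell_sum w p n.
Proof. induction n; simpl. ring. rewrite IHn. ring. Qed.

Lemma cell_sum_telescope (G : R -> R) p n :
  cell_sum (fun x y => G x - G y) p n = G (p O) - G (p n).
Proof. induction n; simpl. ring. rewrite IHn. ring. Qed.

Lemma partition_bounds a b n p :
  partition a b n p -> forall k, (k <= n)%nat -> a <= p k <= b.
Proof.
  intros [H0 [Hn Hs]].
  assert (Hm : forall i j, (i <= j <= n)%nat -> p i <= p j).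
  { intros i j. induction j; intros Hij.
    - replace i with O by lia. lra.
    - destruct (Nat.eq_dec i (S j)) as [->|]; [lra|].
      pose proof (IHj ltac:(lia)). pose proof (Hs j ltac:(lia)). lra. }
  intros k Hk. rewrite <- H0, <- Hn. split; apply Hm; lia.
Qed.

Lemma partition_of_tagged a b n p xi :
  tagged_partition a b n p xi -> partition a b n p.
Proof. intros [H0 [Hn Hs]]. repeat split; auto. intros k Hk. destruct (Hs k Hk); lra. Qed.

Definition join (p : nat -> R) (n : nat) (q : nat -> R) : nat -> R :=
  fun k => if Nat.leb k n then p k else q (k - n)%nat.

Lemma join_left p n q k : (k <= n)%nat -> join p n q k = p k.
Proof. intros H. unfold join. destruct (Nat.leb_spec k n); [reflexivity|lia]. Qed.

Lemma join_right p n q m : p n = q O -> join p n q (n + m)%nat = q m.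
Proof.
  intros H. unfold join. destruct (Nat.leb_spec (n + m) n).
  - replace m with O by lia. rewrite Nat.add_0_r. auto.
  - f_equal. lia.
Qed.

Lemma cell_sum_join w p n q m : p n = q O ->
  cell_sum w (join p n q) (n + m) = cell_sum w p n + cell_sum w q m.
Proof.
  intros H. induction m.
  - rewrite Nat.add_0_r. simpl. rewrite Rplus_0_r.
    apply cell_sum_ext. intros; apply join_left; auto.
  - rewrite Nat.add_succ_r. simpl. rewrite IHm, (join_right p n q m H).
    replace (S (n + m)) with (n + S m)%nat by lia. rewrite (join_right p n q (S m) H). ring.
Qed.

Lemma partition_join a c b n m p q :
  partition a c n p -> partition c b m q -> partition a b (n + m) (join p n q).
Proof.
  intros [Hp0 [Hpn Hps]] [Hq0 [Hqm Hqs]].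
  assert (E : p n = q O) by congruence.
  repeat split.
  - rewrite join_left by lia. auto.
  - rewrite join_right; auto.
  - intros k Hk. destruct (Nat.le_gt_cases (S k) n).
    + rewrite !join_left by lia. apply Hps; lia.
    + replace k with (n + (k - n))%nat by lia.
      replace (S (n + (k - n))) with (n + S (k - n))%nat by lia.
      rewrite !join_right by auto. apply Hqs. lia.
Qed.

Definition two_point (x y : R) : nat -> R := fun k => match k with O => x | _ => y end.

Lemma partition_two_point x y : x <= y -> partition x y 1 (two_point x y).
Proof. intros H. repeat split. intros k Hk. replace k with O by lia. simpl. auto. Qed.

Lemma cell_sum_two_point w x y : cell_sum w (two_point x y) 1 = w x y.
Proof. simpl. ring. Qed.

Lemma partition_extend a1 b1 n p a b : partition a1 b1 n p -> a <= a1 -> b1 <= b ->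
  let q := join (two_point a a1) 1 (join p n (two_point b1 b)) in
  partition a b (1 + (n + 1)) q /\
  forall w, cell_sum w q (1 + (n + 1)) = w a a1 + cell_sum w p n + w b1 b.
Proof.
  intros Hp Ha Hb q. pose proof Hp as [H0 [Hn _]].
  assert (E1 : p n = two_point b1 b O) by (simpl; auto).
  assert (E2 : two_point a a1 1 = join p n (two_point b1 b) O) by (rewrite join_left by lia; simpl; auto).
  split.
  - eapply partition_join; [apply partition_two_point; auto|].
    eapply partition_join; [exact Hp|]. apply partition_two_point; auto.
  - intros w. unfold q. rewrite !cell_sum_join by auto. rewrite !cell_sum_two_point. ring.
Qed.

Definition grid (x0 h : R) : nat -> R := fun k => x0 + INR k * h.

Lemma grid_S x0 h k : grid x0 h (S k) = grid x0 h k + h.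
Proof. unfold grid. rewrite S_INR. ring. Qed.

Lemma grid_O x0 h : grid x0 h O = x0.
Proof. unfold grid. simpl. ring. Qed.

Lemma grid_ge x0 h k : 0 <= h -> x0 <= grid x0 h k.
Proof. intros H. unfold grid. pose proof (pos_INR k). nra. Qed.

Lemma partition_grid x0 h N : 0 <= h -> partition x0 (grid x0 h N) N (grid x0 h).
Proof. intros H. repeat split. apply grid_O. intros k _. rewrite grid_S. lra. Qed.

Lemma uniform_partition a b d : a < b -> 0 < d ->
  exists n p, tagged_partition a b n p p /\
    tagged_partition a b n p (fun k => p (S k)) /\ mesh_lt n p d.
Proof.
  intros Hab Hd. destruct (INR_unbounded ((b - a) / d)) as [n Hn].
  assert (Hn0 : 0 < INR n) by (assert (0 < (b - a) / d) by (apply Rdiv_lt_0_compat; lra); lra).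
  set (h := (b - a) / INR n).
  assert (Hh : 0 < h) by (apply Rdiv_lt_0_compat; lra).
  assert (Hhd : h < d).
  { unfold h. apply (Rmult_lt_reg_r (INR n)); auto.
    replace ((b - a) / INR n * INR n) with (b - a) by (field; lra).
    apply (Rmult_lt_compat_r d) in Hn; auto.
    replace ((b - a) / d * d) with (b - a) in Hn by (field; lra). lra. }
  assert (Hend : grid a h n = b) by (unfold grid, h; field; lra).
  exists n, (grid a h).
  split; [|split]; [split; [apply grid_O|split; [exact Hend|]]..|];
    intros j _; rewrite grid_S; lra.
Qed.

Lemma exp_cell_le tau u h y : 0 <= tau -> 0 < u -> 0 <= h ->
  exp (tau * y) * (exp (- ((tau + u) * (y - h))) - exp (- ((tau + u) * y)))
    <= (tau + u) * exp ((tau + u) * h) / u * (exp (- (u * (y - h))) - exp (- (u * y))).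
Proof.
  intros Htau Hu Hh. set (t := tau + u). set (K := t * exp (t * h) / u).
  assert (E1 : exp (tau * y) * exp (- (t * (y - h))) = exp (- (u * y)) * exp (t * h))
    by (rewrite <- !exp_plus; f_equal; unfold t; ring).
  assert (E2 : exp (tau * y) * exp (- (t * y)) = exp (- (u * y)))
    by (rewrite <- !exp_plus; f_equal; unfold t; ring).
  assert (E3 : exp (- (u * (y - h))) = exp (- (u * y)) * exp (u * h))
    by (rewrite <- !exp_plus; f_equal; ring).
  rewrite Rmult_minus_distr_l, E1, E2, E3.
  pose proof (exp_sub_1_le (t * h)). pose proof (exp_ineq1_le (u * h)).
  pose proof (exp_pos (- (u * y))). pose proof (exp_pos (t * h)).
  assert (exp (t * h) - 1 <= K * (exp (u * h) - 1)).
  { assert (t * h * exp (t * h) = K * (u * h)) by (unfold K; field; lra).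
    assert (0 <= K) by (unfold K; apply Rmult_le_pos;
      [apply Rmult_le_pos; [unfold t|]; lra|apply Rlt_le, Rinv_0_lt_compat; lra]).
    nra. }
  nra.
Qed.

Lemma is_inf_exists (S : R -> Prop) :
  (exists x, S x) -> (exists m, forall x, S x -> m <= x) -> exists i, is_inf S i.
Proof.
  intros [x Hx] [m Hm].
  set (E := fun y => S (- y)).
  assert (Hb : bound E) by (exists (- m); intros y Hy; pose proof (Hm _ Hy); lra).
  assert (Hne : exists y, E y) by (exists (- x); unfold E; rewrite Ropp_involutive; auto).
  destruct (completeness E Hb Hne) as [s [Hs1 Hs2]].
  exists (- s). split.
  - intros z Hz. assert (- z <= s) by (apply Hs1; unfold E; rewrite Ropp_involutive; auto). lra.
  - intros m' Hm'. assert (s <= - m'); [|lra]. apply Hs2. intros y Hy. pose proof (Hm' _ Hy). lra.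
Qed.
Lemma exp_opp_mul_antitone t x y : 0 <= t -> x <= y -> exp (- (t * y)) <= exp (- (t * x)).
Proof. intros. apply exp_le_compat. nra. Qed.

(** * Darboux sums of [exp (- t l)] against [dV] *)

Definition lower_cell (V : R -> R) (t x y : R) : R := exp (- (t * y)) * (V y - V x).
Definition upper_cell (V : R -> R) (t x y : R) : R := exp (- (t * x)) * (V y - V x).

Section Darboux.

Variable V : R -> R.
Hypothesis V_mono : forall x y, 0 < x -> x <= y -> V x <= V y.

Lemma partition_increment_nonneg a b n p : 0 < a -> partition a b n p ->
  forall k, (k < n)%nat -> 0 <= V (p (S k)) - V (p k).
Proof.
  intros Ha Hp k Hk. pose proof (partition_bounds _ _ _ _ Hp k ltac:(lia)).
  destruct Hp as [_ [_ Hs]]. pose proof (V_mono (p k) (p (S k)) ltac:(lra) (Hs k Hk)). lra.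
Qed.

Lemma upper_sum_nonneg t a b n p : 0 < a -> partition a b n p ->
  0 <= cell_sum (upper_cell V t) p n.
Proof.
  intros Ha Hp. apply cell_sum_nonneg. intros k Hk. unfold upper_cell.
  pose proof (partition_increment_nonneg a b n p Ha Hp k Hk).
  pose proof (exp_pos (- (t * p k))). nra.
Qed.

Lemma lower_sum_nonneg t a b n p : 0 < a -> partition a b n p ->
  0 <= cell_sum (lower_cell V t) p n.
Proof.
  intros Ha Hp. apply cell_sum_nonneg. intros k Hk. unfold lower_cell.
  pose proof (partition_increment_nonneg a b n p Ha Hp k Hk).
  pose proof (exp_pos (- (t * p (S k)))). nra.
Qed.

Variable t : R.
Hypothesis t_nonneg : 0 <= t.

(* This replaces the usual common-refinement argument in [lower_sum_le_upper_sum]. *)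
Lemma upper_sum_truncate a : 0 < a ->
  forall m b q, partition a b m q -> forall c, a <= c <= b ->
  exists m' q', partition a c m' q' /\
    cell_sum (upper_cell V t) q' m' + exp (- (t * b)) * (V b - V c)
      <= cell_sum (upper_cell V t) q m.
Proof.
  intros Ha. induction m; intros b q Hq c Hc.
  - destruct Hq as [H0 [Hn Hs]]. assert (b = a) by congruence. subst b.
    assert (c = a) by lra. subst c. exists O, q.
    split; [repeat split; auto; intros; lia|].
    simpl. rewrite H0. replace (V a - V a) with 0 by ring. lra.
  - set (d := q m).
    assert (Hd : a <= d <= b) by (apply (partition_bounds _ _ _ _ Hq); lia).
    assert (Hqd : partition a d m q).
    { destruct Hq as [H0 [Hn Hs]]. split; [exact H0|split; [reflexivity|intros; apply Hs; lia]]. }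
    pose proof (exp_opp_mul_antitone t d b t_nonneg (proj2 Hd)).
    pose proof (exp_pos (- (t * b))) as Hexp.
    destruct Hq as [Hq0 [Hn Hs]].
    destruct (Rle_or_lt d c) as [Hdc|Hdc].
    + exists (S m), (fun k => if Nat.eqb k (S m) then c else q k). split.
      * repeat split; [simpl; auto|rewrite Nat.eqb_refl; auto|].
        intros k Hk. destruct (Nat.eqb_spec k (S m)); [lia|].
        destruct (Nat.eqb_spec (S k) (S m)).
        -- assert (k = m) by lia. subst k. fold d. lra.
        -- apply Hs; lia.
      * simpl. rewrite Nat.eqb_refl. destruct (Nat.eqb_spec m (S m)); [lia|].
        rewrite (cell_sum_ext _ _ q m).
        2:{ intros k Hk. destruct (Nat.eqb_spec k (S m)); [lia|auto]. }
        fold d. unfold upper_cell. rewrite Hn.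
        pose proof (V_mono c b ltac:(lra) ltac:(lra)).
        assert (0 <= (exp (- (t * d)) - exp (- (t * b))) * (V b - V c)) by (apply Rmult_le_pos; lra).
        lra.
    + destruct (IHm d q Hqd c ltac:(lra)) as [m' [q' [Hp' Hs']]].
      exists m', q'. split; auto. simpl. fold d. unfold upper_cell in *. rewrite Hn.
      pose proof (V_mono d b ltac:(lra) ltac:(lra)). pose proof (V_mono c d ltac:(lra) ltac:(lra)).
      assert (0 <= (exp (- (t * d)) - exp (- (t * b))) * (V b - V d)) by (apply Rmult_le_pos; lra).
      nra.
Qed.

Lemma lower_sum_le_upper_sum a : 0 < a ->
  forall n b p, partition a b n p -> forall m q, partition a b m q ->
  cell_sum (lower_cell V t) p n <= cell_sum (upper_cell V t) q m.
Proof.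
  intros Ha. induction n; intros b p Hp m q Hq.
  - simpl. eapply upper_sum_nonneg; eauto.
  - set (c := p n).
    assert (Hc : a <= c <= b) by (apply (partition_bounds _ _ _ _ Hp); lia).
    destruct (upper_sum_truncate a Ha m b q Hq c Hc) as [m' [q' [Hq' Hs]]].
    assert (Hpc : partition a c n p).
    { destruct Hp as [H0 [Hn Hs']]. split; [exact H0|split; [reflexivity|intros; apply Hs'; lia]]. }
    pose proof (IHn c p Hpc m' q' Hq'). simpl. fold c. destruct Hp as [_ [Hn _]].
    unfold lower_cell at 2. rewrite Hn. lra.
Qed.

Lemma rs_sum_between a b n p xi : 0 < a -> tagged_partition a b n p xi ->
  cell_sum (lower_cell V t) p n <= rs_sum (fun l => exp (- (t * l))) V p xi n
    <= cell_sum (upper_cell V t) p n.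
Proof.
  intros Ha Hp. pose proof (partition_of_tagged _ _ _ _ _ Hp) as Hw.
  pose proof (partition_increment_nonneg a b n p Ha Hw) as Hinc.
  destruct Hp as [_ [_ Hs]]. clear Hw.
  induction n; simpl. lra.
  assert (IH := IHn ltac:(intros; apply Hs; lia) ltac:(intros; apply Hinc; lia)).
  destruct (Hs n ltac:(lia)) as [_ [Hx1 Hx2]]. pose proof (Hinc n ltac:(lia)).
  pose proof (exp_opp_mul_antitone t (xi n) (p (S n)) t_nonneg Hx2).
  pose proof (exp_opp_mul_antitone t (p n) (xi n) t_nonneg Hx1).
  unfold lower_cell, upper_cell in *. split; apply Rplus_le_compat; try lra;
    apply Rmult_le_compat_r; lra.
Qed.

Lemma rs_sum_left_tags n p :
  rs_sum (fun l => exp (- (t * l))) V p p n = cell_sum (upper_cell V t) p n.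
Proof. induction n; simpl; [|rewrite IHn]; reflexivity. Qed.

Lemma rs_sum_right_tags n p :
  rs_sum (fun l => exp (- (t * l))) V p (fun k => p (S k)) n = cell_sum (lower_cell V t) p n.
Proof. induction n; simpl; [|rewrite IHn]; reflexivity. Qed.

Lemma upper_sub_lower_sum_le s a b n p K : 0 < a -> partition a b n p ->
  (forall k, (k < n)%nat -> exp (- (t * p k)) - exp (- (s * p (S k))) <= K) ->
  cell_sum (upper_cell V t) p n - cell_sum (lower_cell V s) p n <= K * (V b - V a).
Proof.
  intros Ha Hp HK. pose proof (partition_increment_nonneg a b n p Ha Hp) as Hinc.
  destruct Hp as [<- [<- _]].
  induction n; simpl. lra.
  assert (IH := IHn ltac:(intros; apply HK; lia) ltac:(intros; apply Hinc; lia)).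
  pose proof (HK n ltac:(lia)). pose proof (Hinc n ltac:(lia)). unfold upper_cell, lower_cell in *.
  assert ((exp (- (t * p n)) - exp (- (s * p (S n)))) * (V (p (S n)) - V (p n))
          <= K * (V (p (S n)) - V (p n))) by (apply Rmult_le_compat_r; lra).
  lra.
Qed.

Lemma upper_sub_lower_sum_le_mesh a b n p h : 0 < a -> partition a b n p ->
  (forall k, (k < n)%nat -> p (S k) - p k <= h) ->
  cell_sum (upper_cell V t) p n - cell_sum (lower_cell V t) p n <= t * h * (V b - V a).
Proof.
  intros Ha Hp Hm. apply upper_sub_lower_sum_le; auto.
  intros k Hk. pose proof (partition_bounds _ _ _ _ Hp k ltac:(lia)).
  destruct Hp as [_ [_ Hs]]. pose proof (Hs k Hk). pose proof (Hm k Hk).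
  pose proof (exp_opp_sub_le (t * p k) (t * p (S k)) ltac:(split; nra)). nra.
Qed.

Lemma grid_upper_sub_lower_sum_le s a h N : t <= s -> 0 < a -> 0 <= h ->
  let b := grid a h N in
  cell_sum (upper_cell V t) (grid a h) N - cell_sum (lower_cell V s) (grid a h) N
    <= (t * h + (s - t) * b) * (V b - V a).
Proof.
  intros Hts Ha Hh b. pose proof (partition_grid a h N Hh) as Hp. fold b in Hp.
  apply (upper_sub_lower_sum_le s a b N); auto. intros k Hk.
  pose proof (partition_bounds _ _ _ _ Hp (S k) ltac:(lia)).
  rewrite grid_S in *. pose proof (grid_ge a h k Hh). set (x := grid a h k) in *.
  assert (0 <= t * x) by nra.
  assert (t * x <= s * (x + h)) by (assert (0 <= (s - t) * x) by nra; nra).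
  pose proof (exp_opp_sub_le (t * x) (s * (x + h)) ltac:(lra)).
  assert (0 <= (s - t) * (b - (x + h))) by (apply Rmult_le_pos; lra). nra.
Qed.

Lemma RS_integral_approx a b J : a < b ->
  is_RS_integral (fun l => exp (- (t * l))) V a b J -> forall e, 0 < e ->
  exists n q, partition a b n q /\
    J - e < cell_sum (lower_cell V t) q n /\ cell_sum (upper_cell V t) q n < J + e.
Proof.
  intros Hab HJ e He. destruct (HJ e He) as [d [Hd HJd]].
  destruct (uniform_partition a b d Hab Hd) as [n [q [Hl [Hr Hm]]]].
  exists n, q. split; [eapply partition_of_tagged; eauto|].
  pose proof (HJd n q q Hl Hm) as H1. pose proof (HJd n q _ Hr Hm) as H2.
  rewrite rs_sum_left_tags in H1. rewrite rs_sum_right_tags in H2.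
  apply Rabs_def2 in H1, H2. lra.
Qed.

Lemma RS_integral_bounds a b J : 0 < a -> a < b ->
  is_RS_integral (fun l => exp (- (t * l))) V a b J ->
  forall n p, partition a b n p ->
  cell_sum (lower_cell V t) p n <= J <= cell_sum (upper_cell V t) p n.
Proof.
  intros Ha Hab HJ n p Hp. split; apply Rle_plus_epsilon; intros e He;
    destruct (RS_integral_approx a b J Hab HJ e He) as [m [q [Hq [H1 H2]]]].
  - pose proof (lower_sum_le_upper_sum a Ha n b p Hp m q Hq). lra.
  - pose proof (lower_sum_le_upper_sum a Ha m b q Hq n p Hp). lra.
Qed.

Lemma RS_integral_exists a b : 0 < a -> a < b ->
  exists J, is_RS_integral (fun l => exp (- (t * l))) V a b J.
Proof.
  intros Ha Hab.
  set (E := fun y => exists n p, partition a b n p /\ y = cell_sum (lower_cell V t) p n).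
  assert (Hab' : partition a b 1 (two_point a b)) by (apply partition_two_point; lra).
  assert (Hb : bound E).
  { exists (cell_sum (upper_cell V t) (two_point a b) 1). intros y [n [p [Hp ->]]].
    eapply lower_sum_le_upper_sum; eauto. }
  assert (Hne : exists y, E y) by (eexists; exists 1%nat, (two_point a b); split; eauto).
  destruct (completeness E Hb Hne) as [J [HJ1 HJ2]].
  exists J. intros e He. pose proof (V_mono a b Ha ltac:(lra)).
  set (d := e / (t * (V b - V a) + 1)).
  assert (Hd : 0 < d) by (apply Rdiv_lt_0_compat; nra).
  assert (Hde : t * d * (V b - V a) < e).
  { unfold d. apply (Rmult_lt_reg_r (t * (V b - V a) + 1)). nra.
    replace (t * (e / (t * (V b - V a) + 1)) * (V b - V a) * (t * (V b - V a) + 1))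
      with (t * (V b - V a) * e) by (field; nra). nra. }
  exists d. split; auto. intros n p xi Hp Hm.
  pose proof (rs_sum_between a b n p xi Ha Hp).
  assert (Hw := partition_of_tagged _ _ _ _ _ Hp).
  assert (cell_sum (lower_cell V t) p n <= J) by (apply HJ1; exists n, p; auto).
  assert (J <= cell_sum (upper_cell V t) p n).
  { apply HJ2. intros y [m [q [Hq ->]]]. apply (lower_sum_le_upper_sum a Ha m b q Hq n p Hw). }
  pose proof (upper_sub_lower_sum_le_mesh a b n p d Ha Hw
                ltac:(intros k Hk; pose proof (Hm k Hk); lra)).
  apply Rabs_def1; lra.
Qed.

(* Summation by parts, with [V] replaced by a larger [W] on the interior points. *)
Lemma upper_sum_by_parts_le W p M :
  (forall j, (j < M)%nat -> V (p (S j)) <= W (p (S j))) ->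
  (forall j, (j < M)%nat -> exp (- (t * p (S j))) <= exp (- (t * p j))) ->
  cell_sum (upper_cell V t) p (S M)
    <= exp (- (t * p M)) * V (p (S M)) - exp (- (t * p O)) * V (p O) +
       cell_sum (fun x y => W y * (exp (- (t * x)) - exp (- (t * y)))) p M.
Proof.
  intros HW Hdec. induction M.
  - simpl. unfold upper_cell. lra.
  - assert (IH := IHM ltac:(intros; apply HW; lia) ltac:(intros; apply Hdec; lia)).
    simpl in IH |- *. pose proof (HW M ltac:(lia)). pose proof (Hdec M ltac:(lia)).
    assert (0 <= (W (p (S M)) - V (p (S M))) * (exp (- (t * p M)) - exp (- (t * p (S M)))))
      by (apply Rmult_le_pos; lra).
    unfold upper_cell in *. nra.
Qed.

Lemma grid_upper_sum_le_lower_sum T s m h N : 0 <= T -> 0 <= s -> 0 < m -> 0 <= h ->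
  cell_sum (upper_cell V (T + s)) (grid m h) N
    <= exp ((T + s) * h) * exp (- (s * (m + h))) * cell_sum (lower_cell V T) (grid m h) N.
Proof.
  intros HT Hs Hm Hh. rewrite <- cell_sum_scal. apply cell_sum_le. intros k Hk.
  unfold upper_cell, lower_cell. rewrite grid_S. pose proof (grid_ge m h k Hh).
  set (x := grid m h k) in *.
  assert (exp (- ((T + s) * x)) <= exp ((T + s) * h) * exp (- (s * (m + h))) * exp (- (T * (x + h)))).
  { rewrite <- !exp_plus. apply exp_le_compat. nra. }
  pose proof (V_mono x (x + h) ltac:(lra) ltac:(lra)). nra.
Qed.

End Darboux.

(** * The Laplace–Stieltjes transform *)

Section Laplace.

Variable V : R -> R.
Hypothesis V_mono : forall x y, 0 < x -> x <= y -> V x <= V y.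
Hypothesis V_lim0 :
  forall e, 0 < e -> exists d, 0 < d /\ forall y, 0 < y < d -> Rabs (V y) < e.
Variable L : R.
Hypothesis V_lim_inf : forall e, 0 < e -> exists M, forall y, M < y -> Rabs (V y - L) < e.
Hypothesis V_rcont : forall x, 0 < x -> forall e, 0 < e -> exists d, 0 < d /\
  forall y, x <= y < x + d -> Rabs (V y - V x) < e.

Lemma V_nonneg x : 0 < x -> 0 <= V x.
Proof.
  intros Hx. destruct (Rle_or_lt 0 (V x)) as [H|H]; auto.
  destruct (V_lim0 (- V x) ltac:(lra)) as [d [Hd Hd']].
  set (y := Rmin d x / 2).
  pose proof (Rmin_pos d x Hd Hx). pose proof (Rmin_l d x). pose proof (Rmin_r d x).
  pose proof (Hd' y ltac:(unfold y; lra)) as Hy.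
  pose proof (V_mono y x ltac:(unfold y; lra) ltac:(unfold y; lra)).
  apply Rabs_def2 in Hy. lra.
Qed.

Lemma V_le_lim x : 0 < x -> V x <= L.
Proof.
  intros Hx. destruct (Rle_or_lt (V x) L) as [H|H]; auto.
  destruct (V_lim_inf (V x - L) ltac:(lra)) as [M HM].
  set (y := Rmax M x + 1). pose proof (Rmax_l M x). pose proof (Rmax_r M x).
  pose proof (HM y ltac:(unfold y; lra)) as Hy. pose proof (V_mono x y Hx ltac:(unfold y; lra)).
  apply Rabs_def2 in Hy. lra.
Qed.

Lemma exists_small_V e u : 0 < e -> 0 < u -> exists a, 0 < a < u /\ V a < e.
Proof.
  intros He Hu. destruct (V_lim0 e He) as [d [Hd Hd']].
  exists (Rmin d u / 2).
  pose proof (Rmin_pos d u Hd Hu). pose proof (Rmin_l d u). pose proof (Rmin_r d u).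
  pose proof (Hd' (Rmin d u / 2) ltac:(lra)) as Ha. apply Rabs_def2 in Ha. lra.
Qed.

Lemma exists_large_V e u : 0 < e -> exists b, u < b /\ L - V b < e.
Proof.
  intros He. destruct (V_lim_inf e He) as [M HM].
  exists (Rmax M u + 1). pose proof (Rmax_l M u). pose proof (Rmax_r M u).
  pose proof (HM (Rmax M u + 1) ltac:(lra)) as Hb. apply Rabs_def2 in Hb. lra.
Qed.

Section Fixed_exponent.

Variable t : R.
Hypothesis t_nonneg : 0 <= t.

Lemma lower_cell_nonneg x y : 0 < x -> x <= y -> 0 <= lower_cell V t x y.
Proof.
  intros Hx Hxy. unfold lower_cell. pose proof (V_mono x y Hx Hxy).
  pose proof (exp_pos (- (t * y))). nra.
Qed.

Lemma upper_cell_le_V x y : 0 < x -> x <= y -> upper_cell V t x y <= V y.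
Proof.
  intros Hx Hxy. unfold upper_cell. pose proof (V_mono x y Hx Hxy). pose proof (V_nonneg x Hx).
  pose proof (exp_opp_le_1 (t * x) ltac:(nra)). pose proof (exp_pos (- (t * x))). nra.
Qed.

Lemma upper_cell_le_lim x y : 0 < x -> x <= y -> upper_cell V t x y <= L - V x.
Proof.
  intros Hx Hxy. unfold upper_cell. pose proof (V_mono x y Hx Hxy). pose proof (V_le_lim y ltac:(lra)).
  pose proof (exp_opp_le_1 (t * x) ltac:(nra)). pose proof (exp_pos (- (t * x))). nra.
Qed.

(* The integral is the supremum of the lower sums over all partitions of intervals in (0, oo). *)
Lemma LS_integral_exists : exists I, is_LS_integral (fun l => exp (- (t * l))) V I.
Proof.
  set (E := fun y => exists a b n p, 0 < a /\ a < b /\ partition a b n p /\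
                                      y = cell_sum (lower_cell V t) p n).
  assert (Hb : bound E).
  { exists L. intros y [a [b [n [p [Ha [Hab [Hp ->]]]]]]].
    eapply Rle_trans.
    - apply (lower_sum_le_upper_sum V V_mono t t_nonneg a Ha n b p Hp 1 (two_point a b)).
      apply partition_two_point; lra.
    - rewrite cell_sum_two_point. pose proof (upper_cell_le_lim a b Ha ltac:(lra)).
      pose proof (V_nonneg a Ha). lra. }
  assert (Hne : exists y, E y).
  { eexists. exists 1, 2, 1%nat, (two_point 1 2). repeat split; try lra.
    intros k Hk. replace k with O by lia. simpl. lra. }
  destruct (completeness E Hb Hne) as [I [HI1 HI2]].
  exists I. intros e He.
  assert (Hy : exists y, E y /\ I - e < y).
  { apply NNPP. intros Hc. assert (I <= I - e); [|lra]. apply HI2. intros y Hy.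
    destruct (Rle_or_lt y (I - e)); auto. exfalso; apply Hc; exists y; auto. }
  destruct Hy as [y [[a1 [b1 [n [p [Ha1 [Hab1 [Hp ->]]]]]]] Hy]].
  exists a1, b1. split; auto. intros a b Ha Hb1.
  destruct (RS_integral_exists V V_mono t t_nonneg a b ltac:(lra) ltac:(lra)) as [J HJ].
  exists J. split; auto.
  destruct (partition_extend a1 b1 n p a b Hp ltac:(lra) ltac:(lra)) as [Hw Hs].
  pose proof (RS_integral_bounds V V_mono t t_nonneg a b J ltac:(lra) ltac:(lra) HJ _ _ Hw) as [HJl _].
  rewrite Hs in HJl.
  pose proof (lower_cell_nonneg a a1 ltac:(lra) ltac:(lra)).
  pose proof (lower_cell_nonneg b1 b ltac:(lra) ltac:(lra)).
  assert (J <= I).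
  { apply Rle_plus_epsilon. intros e' He'.
    destruct (RS_integral_approx V t a b J ltac:(lra) HJ e' He') as [m [q [Hq [Hq1 _]]]].
    assert (cell_sum (lower_cell V t) q m <= I)
      by (apply HI1; exists a, b, m, q; split; [lra|split; [lra|split; auto]]).
    lra. }
  apply Rabs_def1; lra.
Qed.

Lemma LapV_is_LS_integral : is_LS_integral (fun l => exp (- (t * l))) V (LapV V t).
Proof. unfold LapV. apply epsilon_spec, LS_integral_exists. Qed.

Lemma LapV_approx a b n p e : 0 < a -> partition a b n p -> 0 < e ->
  exists a' b' J, 0 < a' < a /\ b < b' /\
    is_RS_integral (fun l => exp (- (t * l))) V a' b' J /\ Rabs (J - LapV V t) < e.
Proof.
  intros Ha Hp He. destruct (LapV_is_LS_integral e He) as [a0 [b0 [Ha0 Hab0]]].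
  set (a' := Rmin a a0 / 2). set (b' := Rmax b b0 + 1).
  pose proof (Rmin_l a a0). pose proof (Rmin_r a a0). pose proof (Rmin_pos a a0 Ha Ha0).
  pose proof (Rmax_l b b0). pose proof (Rmax_r b b0).
  destruct (Hab0 a' b' ltac:(unfold a'; lra) ltac:(unfold b'; lra)) as [J [HJ HJe]].
  exists a', b', J. unfold a', b' in *. repeat split; auto; lra.
Qed.

Lemma LapV_ge_lower_sum a b n p : 0 < a -> partition a b n p ->
  cell_sum (lower_cell V t) p n <= LapV V t.
Proof.
  intros Ha Hp. pose proof (partition_bounds _ _ _ _ Hp n ltac:(lia)).
  apply Rle_plus_epsilon. intros e He.
  destruct (LapV_approx a b n p e Ha Hp He) as [a' [b' [J [Ha' [Hb' [HJ HJe]]]]]].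
  apply Rabs_def2 in HJe.
  destruct (partition_extend a b n p a' b' Hp ltac:(lra) ltac:(lra)) as [Hw Hs].
  pose proof (RS_integral_bounds V V_mono t t_nonneg a' b' J ltac:(lra) ltac:(lra) HJ _ _ Hw) as [HJl _].
  rewrite Hs in HJl.
  pose proof (lower_cell_nonneg a' a ltac:(lra) ltac:(lra)).
  pose proof (lower_cell_nonneg b b' ltac:(lra) ltac:(lra)). lra.
Qed.

Lemma LapV_le_upper_sum a b n p : 0 < a -> partition a b n p ->
  LapV V t <= V a + cell_sum (upper_cell V t) p n + (L - V b).
Proof.
  intros Ha Hp. pose proof (partition_bounds _ _ _ _ Hp n ltac:(lia)).
  apply Rle_plus_epsilon. intros e He.
  destruct (LapV_approx a b n p e Ha Hp He) as [a' [b' [J [Ha' [Hb' [HJ HJe]]]]]].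
  apply Rabs_def2 in HJe.
  destruct (partition_extend a b n p a' b' Hp ltac:(lra) ltac:(lra)) as [Hw Hs].
  pose proof (RS_integral_bounds V V_mono t t_nonneg a' b' J ltac:(lra) ltac:(lra) HJ _ _ Hw) as [_ HJu].
  rewrite Hs in HJu.
  pose proof (upper_cell_le_V a' a ltac:(lra) ltac:(lra)). pose proof (V_nonneg a' ltac:(lra)).
  pose proof (upper_cell_le_lim b b' ltac:(lra) ltac:(lra)). lra.
Qed.

Lemma LapV_le_tail a : 0 < a -> LapV V t <= V a + exp (- (t * a)) * (L - V a).
Proof.
  intros Ha. apply Rle_plus_epsilon. intros e He.
  destruct (exists_large_V e a He) as [b [Hb Hb']].
  pose proof (LapV_le_upper_sum a b 1 (two_point a b) Ha (partition_two_point a b ltac:(lra))) as H.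
  rewrite cell_sum_two_point in H. unfold upper_cell in H. pose proof (V_le_lim b ltac:(lra)).
  pose proof (exp_pos (- (t * a))).
  assert (exp (- (t * a)) * (V b - V a) <= exp (- (t * a)) * (L - V a)) by (apply Rmult_le_compat_l; lra).
  lra.
Qed.

Lemma exp_mul_V_le_LapV l : 0 < l -> exp (- (t * l)) * V l <= LapV V t.
Proof.
  intros Hl. apply Rle_plus_epsilon. intros e He.
  destruct (exists_small_V e l He Hl) as [a [Ha Ha']].
  pose proof (LapV_ge_lower_sum a l 1 (two_point a l) ltac:(lra) (partition_two_point a l ltac:(lra))) as H.
  rewrite cell_sum_two_point in H. unfold lower_cell in H. pose proof (V_nonneg a ltac:(lra)).
  pose proof (exp_opp_le_1 (t * l) ltac:(nra)). pose proof (exp_pos (- (t * l))). nra.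
Qed.

Lemma LapV_le_lim : LapV V t <= L.
Proof.
  pose proof (LapV_le_tail 1 ltac:(lra)). pose proof (V_nonneg 1 ltac:(lra)).
  pose proof (V_le_lim 1 ltac:(lra)). pose proof (exp_opp_le_1 (t * 1) ltac:(nra)).
  pose proof (exp_pos (- (t * 1))). nra.
Qed.

End Fixed_exponent.

Lemma LapV_eventually_le eps : 0 < eps -> exists t, 0 <= t /\ LapV V t <= eps.
Proof.
  intros He.
  destruct (exists_small_V (eps / 2) 1 ltac:(lra) ltac:(lra)) as [a [Ha Ha']].
  pose proof (V_nonneg a ltac:(lra)). pose proof (V_le_lim a ltac:(lra)).
  set (K := 2 * (L + 1) / eps).
  assert (HK : 0 < K) by (unfold K; apply Rdiv_lt_0_compat; lra).
  exists (K / a). assert (Ht : 0 <= K / a) by (apply Rlt_le, Rdiv_lt_0_compat; lra).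
  split; auto.
  pose proof (LapV_le_tail (K / a) Ht a ltac:(lra)) as Htail.
  replace (K / a * a) with K in Htail by (field; lra).
  pose proof (exp_opp_mul_le (eps / 2) (L + 1) K ltac:(lra) ltac:(lra) ltac:(unfold K; right; field; lra)).
  pose proof (exp_pos (- K)). nra.
Qed.

Lemma LapV_right_usc t : 0 <= t -> forall e, 0 < e ->
  exists d, 0 < d /\ forall s, t <= s <= t + d -> LapV V t <= LapV V s + e.
Proof.
  intros Ht e He.
  destruct (exists_small_V (e / 4) 1 ltac:(lra) ltac:(lra)) as [a [Ha Ha']].
  destruct (exists_large_V (e / 4) a ltac:(lra)) as [b0 [Hb0 Hb0']].
  pose proof (V_nonneg a ltac:(lra)). pose proof (V_le_lim a ltac:(lra)).
  set (h := e / (4 * (t + 1) * (L + 1))).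
  assert (Hh : 0 < h) by (unfold h; apply Rdiv_lt_0_compat; nra).
  assert (Hth : t * h * (L + 1) <= e / 4).
  { replace (t * h * (L + 1)) with (e / 4 * (t / (t + 1))) by (unfold h; field; lra).
    pose proof (div_add_1_bounds t Ht). nra. }
  destruct (INR_mul_unbounded a h b0 Hh) as [N HN]. fold (grid a h N) in HN.
  set (b := grid a h N) in HN.
  pose proof (V_mono a b ltac:(lra) ltac:(lra)). pose proof (V_le_lim b ltac:(lra)).
  pose proof (V_mono b0 b ltac:(lra) ltac:(lra)).
  exists (e / (4 * (b * (L + 1) + 1))). split; [apply Rdiv_lt_0_compat; nra|].
  intros s Hs.
  assert (Hsd : (s - t) * b * (L + 1) <= e / 4).
  { assert (Hst : s - t <= e / (4 * (b * (L + 1) + 1))) by lra.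
    apply (Rmult_le_compat_r (4 * (b * (L + 1) + 1))) in Hst; [|nra].
    replace (e / (4 * (b * (L + 1) + 1)) * (4 * (b * (L + 1) + 1))) with e in Hst by (field; nra).
    nra. }
  pose proof (partition_grid a h N ltac:(lra)) as Hp.
  pose proof (LapV_le_upper_sum t Ht a b N (grid a h) ltac:(lra) Hp).
  pose proof (LapV_ge_lower_sum s ltac:(lra) a b N (grid a h) ltac:(lra) Hp).
  pose proof (grid_upper_sub_lower_sum_le V V_mono t Ht s a h N ltac:(lra) ltac:(lra) ltac:(lra)) as Hd.
  fold b in Hd.
  assert ((t * h + (s - t) * b) * (V b - V a) <= (t * h + (s - t) * b) * (L + 1))
    by (apply Rmult_le_compat_l; nra).
  lra.
Qed.

(* Summation by parts against the majorant [exp (tau x)] of [V]. *)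
Lemma grid_upper_sum_le_exp tau u p0 h N : 0 <= tau -> 0 < u -> 0 < p0 -> 0 < h ->
  (forall x, p0 + h <= x -> V x <= exp (tau * x)) ->
  cell_sum (upper_cell V (tau + u)) (grid p0 h) (S N)
    <= exp (- ((tau + u) * grid p0 h N)) * V (grid p0 h (S N))
       + (tau + u) * exp ((tau + u) * h) / u * exp (- (u * p0)).
Proof.
  intros Htau Hu Hp0 Hh HW. set (t := tau + u). set (K := t * exp (t * h) / u).
  assert (HK : 0 <= K) by (unfold K, t; pose proof (exp_pos ((tau + u) * h));
    apply Rmult_le_pos; [nra|apply Rlt_le, Rinv_0_lt_compat; lra]).
  pose proof (upper_sum_by_parts_le V t (fun x => exp (tau * x)) (grid p0 h) N
    ltac:(intros j _; rewrite grid_S; apply HW; pose proof (grid_ge p0 h j ltac:(lra)); lra)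
    ltac:(intros j _; rewrite grid_S; apply exp_opp_mul_antitone; unfold t; lra)) as Hparts.
  assert (Hsum : cell_sum (fun x y => exp (tau * y) * (exp (- (t * x)) - exp (- (t * y)))) (grid p0 h) N
                 <= cell_sum (fun x y => K * exp (- (u * x)) - K * exp (- (u * y))) (grid p0 h) N).
  { apply cell_sum_le. intros k _. rewrite grid_S.
    pose proof (exp_cell_le tau u h (grid p0 h k + h) Htau Hu ltac:(lra)) as Hc.
    replace (grid p0 h k + h - h) with (grid p0 h k) in Hc by ring. fold t K in Hc. lra. }
  rewrite (cell_sum_telescope (fun x => K * exp (- (u * x)))) in Hsum.
  rewrite grid_O in Hparts, Hsum.
  pose proof (exp_pos (- (u * grid p0 h N))). pose proof (exp_pos (- (t * p0))).
  pose proof (V_nonneg p0 Hp0). nra.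
Qed.

(** * The hitting time [TV] *)

Lemma TV_spec eps : 0 < eps ->
  0 <= TV V eps /\ LapV V (TV V eps) <= eps /\
  forall s, 0 <= s -> LapV V s <= eps -> TV V eps <= s.
Proof.
  intros He. unfold TV. apply epsilon_spec.
  set (E := fun x => 0 <= - x /\ LapV V (- x) <= eps).
  assert (Hb : bound E) by (exists 0; intros x [Hx _]; lra).
  assert (Hne : exists x, E x).
  { destruct (LapV_eventually_le eps He) as [t [Ht Ht']].
    exists (- t). unfold E. rewrite Ropp_involutive. auto. }
  destruct (completeness E Hb Hne) as [m [Hm1 Hm2]].
  assert (Hm0 : m <= 0) by (apply Hm2; intros x [Hx _]; lra).
  assert (Hmin : forall s, 0 <= s -> LapV V s <= eps -> - m <= s).
  { intros s Hs Hs'. assert (- s <= m) by (apply Hm1; unfold E; rewrite Ropp_involutive; auto). lra. }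
  exists (- m). split; [lra|split; auto].
  apply Rle_plus_epsilon. intros e He'.
  destruct (LapV_right_usc (- m) ltac:(lra) e He') as [d [Hd Hd']].
  assert (Hs : exists s, 0 <= s /\ LapV V s <= eps /\ s < - m + d).
  { apply NNPP. intros Hc. assert (m <= m - d); [|lra]. apply Hm2. intros x [Hx1 Hx2].
    destruct (Rle_or_lt x (m - d)); auto. exfalso. apply Hc.
    exists (- x). repeat split; auto; lra. }
  destruct Hs as [s [Hs1 [Hs2 Hs3]]].
  pose proof (Hmin s Hs1 Hs2). pose proof (Hd' s ltac:(lra)). lra.
Qed.

Lemma TV_le eps t : 0 < eps -> 0 <= t -> LapV V t <= eps -> TV V eps <= t.
Proof. intros He Ht H. apply (TV_spec eps He); auto. Qed.

Lemma TV_antitone x y : 0 < x -> x <= y -> TV V y <= TV V x.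
Proof.
  intros Hx Hxy. destruct (TV_spec x Hx) as [H1 [H2 _]]. apply TV_le; auto; lra.
Qed.

(** * The thresholds [lamV] and [tauV] *)

Section Fixed_level.

Variable c : R.
Hypothesis c_range : 0 < c < L.

Lemma lamV_is_inf : is_inf (fun l => 0 < l /\ c < V l) (lamV V c).
Proof.
  unfold lamV. apply epsilon_spec, is_inf_exists.
  - destruct (exists_large_V (L - c) 0 ltac:(lra)) as [b [Hb Hb']].
    exists b. split; lra.
  - exists 0. intros x [Hx _]. lra.
Qed.

Lemma lamV_pos : 0 < lamV V c.
Proof.
  destruct lamV_is_inf as [_ H].
  destruct (V_lim0 c ltac:(lra)) as [d [Hd Hd']].
  assert (d <= lamV V c); [|lra]. apply H. intros x [Hx Hx'].
  destruct (Rle_or_lt d x); auto. pose proof (Hd' x ltac:(lra)) as Hv. apply Rabs_def2 in Hv. lra.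
Qed.

Lemma V_le_of_lt_lamV l : 0 < l < lamV V c -> V l <= c.
Proof.
  intros Hl. destruct lamV_is_inf as [H _].
  destruct (Rle_or_lt (V l) c); auto. pose proof (H l ltac:(split; lra)). lra.
Qed.

(* Right continuity is what makes the infimum attained. *)
Lemma V_lamV_ge : c <= V (lamV V c).
Proof.
  pose proof lamV_pos as Hp. destruct lamV_is_inf as [H1 H2].
  destruct (Rle_or_lt c (V (lamV V c))) as [H|H]; auto.
  destruct (V_rcont _ Hp (c - V (lamV V c)) ltac:(lra)) as [d [Hd Hd']].
  assert (lamV V c + d <= lamV V c); [|lra]. apply H2. intros x [Hx Hx'].
  pose proof (H1 x ltac:(split; auto)).
  destruct (Rle_or_lt (lamV V c + d) x) as [Hxx|Hxx]; auto.
  pose proof (Hd' x ltac:(lra)) as Hab. apply Rabs_def2 in Hab. lra.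
Qed.

Lemma tauV_is_sup :
  is_sup (fun y => exists l, lamV V c <= l /\ 0 < l /\ y = ln (1 + V l) / l) (tauV V c).
Proof.
  pose proof lamV_pos as Hp. unfold tauV. apply epsilon_spec.
  set (E := fun y => exists l, lamV V c <= l /\ 0 < l /\ y = ln (1 + V l) / l).
  assert (Hb : bound E).
  { exists (ln (1 + L) / lamV V c). intros y [l [Hl1 [Hl2 ->]]].
    pose proof (V_nonneg l Hl2). pose proof (V_le_lim l Hl2).
    assert (0 <= ln (1 + V l)) by (rewrite <- ln_1; apply ln_le_compat; lra).
    assert (ln (1 + V l) <= ln (1 + L)) by (apply ln_le_compat; lra).
    unfold Rdiv. apply Rle_trans with (ln (1 + L) * / l).
    - apply Rmult_le_compat_r; [apply Rlt_le, Rinv_0_lt_compat|]; lra.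
    - apply Rmult_le_compat_l; [lra|]. apply Rinv_le_contravar; lra. }
  assert (Hne : exists y, E y) by (eexists; exists (lamV V c); split; [lra|split; eauto]).
  destruct (completeness E Hb Hne) as [s Hs]. exists s. exact Hs.
Qed.

Lemma tauV_le M : (forall l, lamV V c <= l -> 0 < l -> ln (1 + V l) / l <= M) -> tauV V c <= M.
Proof. intros H. apply tauV_is_sup. intros y [l [H3 [H4 ->]]]. auto. Qed.

Lemma V_le_exp_tauV l : lamV V c <= l -> V l <= exp (tauV V c * l) - 1.
Proof.
  intros Hl. pose proof lamV_pos as Hp.
  pose proof (proj1 tauV_is_sup (ln (1 + V l) / l) ltac:(exists l; split; [lra|split; [lra|auto]])) as H.
  pose proof (V_nonneg l ltac:(lra)).
  apply (Rmult_le_compat_r l) in H; [|lra].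
  replace (ln (1 + V l) / l * l) with (ln (1 + V l)) in H by (field; lra).
  apply exp_le_compat in H. rewrite exp_ln in H by lra. lra.
Qed.

Lemma ln_1_add_le_tauV_mul_lamV : ln (1 + c) <= tauV V c * lamV V c.
Proof.
  pose proof lamV_pos as Hp. pose proof V_lamV_ge as Hge.
  pose proof (proj1 tauV_is_sup (ln (1 + V (lamV V c)) / lamV V c)
    ltac:(exists (lamV V c); split; [lra|split; [lra|auto]])) as H.
  assert (ln (1 + c) <= ln (1 + V (lamV V c))) by (apply ln_le_compat; lra).
  apply (Rmult_le_compat_r (lamV V c)) in H; [|lra].
  replace (ln (1 + V (lamV V c)) / lamV V c * lamV V c) with (ln (1 + V (lamV V c))) in H
    by (field; lra). lra.
Qed.

Lemma tauV_pos : 0 < tauV V c.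
Proof.
  pose proof ln_1_add_le_tauV_mul_lamV. pose proof lamV_pos.
  assert (0 < ln (1 + c)) by (rewrite <- ln_1; apply ln_increasing; lra). nra.
Qed.

Lemma tauV_le_TV : tauV V c <= TV V (c / (1 + c)).
Proof.
  assert (Hcc : 0 < c / (1 + c)) by (apply Rdiv_lt_0_compat; lra).
  destruct (TV_spec _ Hcc) as [HT0 [HT _]]. set (T := TV V (c / (1 + c))) in *.
  apply tauV_le. intros l Hl Hl0.
  pose proof V_lamV_ge as Hge. pose proof (V_mono _ _ lamV_pos Hl) as Hmono.
  pose proof (exp_mul_V_le_LapV T HT0 l Hl0) as Hlow. set (E := exp (- (T * l))) in *.
  assert (HE : 0 < E) by apply exp_pos.
  assert (HEc : E * V l * (1 + c) <= c).
  { replace c with (c / (1 + c) * (1 + c)) at 2 by (field; lra). apply Rmult_le_compat_r; lra. }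
  assert (HEv : E * (1 + V l) <= 1).
  { assert (Hm : E * (1 + V l) * (V l * (1 + c)) <= 1 * (V l * (1 + c))) by nra.
    apply Rmult_le_reg_r in Hm; nra. }
  assert (H1v : 1 + V l <= exp (T * l)).
  { unfold E in HEv. rewrite exp_Ropp in HEv. pose proof (exp_pos (T * l)).
    apply (Rmult_le_compat_r (exp (T * l))) in HEv; [|lra].
    rewrite Rmult_comm, <- Rmult_assoc, Rinv_r, Rmult_1_l in HEv by lra. lra. }
  apply ln_le_compat in H1v; [|lra]. rewrite ln_exp in H1v.
  apply (Rmult_le_reg_r l); auto. replace (ln (1 + V l) / l * l) with (ln (1 + V l)) by (field; lra).
  lra.
Qed.

Lemma LapV_tauV_add_le u : 0 < u ->
  LapV V (tauV V c + u) <= c + (tauV V c + u) / u * exp (- (u * lamV V c)).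
Proof.
  intros Hu. pose proof tauV_pos as Htau. pose proof lamV_pos as Hlam.
  set (tau := tauV V c) in *. set (lam := lamV V c) in *. set (t := tau + u).
  apply Rle_plus_epsilon. intros e He.
  set (kap := e * u / (4 * (t + 1))).
  assert (Hkap : 0 < kap) by (unfold kap; apply Rdiv_lt_0_compat; unfold t; nra).
  destruct (exists_step_exp_le (t + u) kap (lam / 2) ltac:(unfold t; lra) Hkap ltac:(lra))
    as [h [[Hh Hhl] Heh]].
  set (p0 := lam - h). assert (Hp0 : 0 < p0) by (unfold p0; lra).
  pose proof (V_le_of_lt_lamV p0 ltac:(unfold p0, lam in *; lra)) as HVp0.
  destruct (exists_large_V (e / 4) p0 ltac:(lra)) as [b0 [Hb0 Hb0']].
  set (x1 := (L + 1) / (e / 4) / t).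
  destruct (INR_mul_unbounded p0 h (Rmax b0 x1) Hh) as [N HN]. fold (grid p0 h N) in HN.
  pose proof (Rmax_l b0 x1). pose proof (Rmax_r b0 x1).
  set (pM := grid p0 h N) in *. set (b := grid p0 h (S N)).
  assert (Hb : b = pM + h) by apply grid_S.
  pose proof (V_nonneg b ltac:(lra)). pose proof (V_le_lim b ltac:(lra)).
  pose proof (V_mono b0 b ltac:(lra) ltac:(lra)).
  pose proof (LapV_le_upper_sum t ltac:(unfold t; lra) p0 b (S N) (grid p0 h) Hp0
                (partition_grid p0 h (S N) ltac:(lra))) as HU.
  assert (Hmaj : forall x, p0 + h <= x -> V x <= exp (tau * x))
    by (intros x Hx; assert (Hl : lamV V c <= x) by (unfold p0, lam in *; lra);
        pose proof (V_le_exp_tauV x Hl) as Hx'; fold tau in Hx'; lra).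
  pose proof (grid_upper_sum_le_exp tau u p0 h N ltac:(lra) Hu Hp0 Hh Hmaj) as Hgrid.
  fold t pM b in Hgrid.
  assert (Htail : exp (- (t * pM)) * V b <= e / 4).
  { pose proof (exp_pos (- (t * pM))).
    assert (exp (- (t * pM)) * (L + 1) <= e / 4).
    { apply exp_opp_mul_le; try lra.
      replace ((L + 1) / (e / 4)) with (t * x1) by (unfold x1, t; field; lra).
      apply Rmult_le_compat_l; unfold t; lra. }
    nra. }
  pose proof (exp_shift_le t u lam h e ltac:(unfold t; lra) Hu ltac:(lra) He Heh) as Hshift.
  fold p0 in Hshift.
  lra.
Qed.

Lemma TV_le_tauV_scaled A : 0 < A ->
  let alpha := sqrt (tauV V c * lamV V c) in
  TV V (c + (A + alpha) / (A * exp (A * alpha))) <= tauV V c * (alpha + A) / alpha.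
Proof.
  intros HA alpha. pose proof tauV_pos as Htau. pose proof lamV_pos as Hlam.
  set (tau := tauV V c) in *. set (lam := lamV V c) in *.
  assert (Hal : 0 < alpha) by (apply sqrt_lt_R0; nra).
  assert (Hal2 : alpha * alpha = tau * lam) by (apply sqrt_sqrt; nra).
  set (u := tau * A / alpha).
  assert (Hu : 0 < u) by (unfold u; apply Rdiv_lt_0_compat; nra).
  pose proof (LapV_tauV_add_le u Hu) as Hcore. fold tau lam in Hcore.
  assert (E1 : tau + u = tau * (alpha + A) / alpha) by (unfold u; field; lra).
  assert (Hul : u * lam = A * alpha).
  { unfold u. apply (Rmult_eq_reg_r alpha); [|lra].
    replace (tau * A / alpha * lam * alpha) with (A * (tau * lam)) by (field; lra). rewrite <- Hal2. ring. }
  assert (E2 : (tau + u) / u * exp (- (u * lam)) = (A + alpha) / (A * exp (A * alpha))).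
  { rewrite Hul, exp_Ropp. pose proof (exp_pos (A * alpha)). unfold u. field. split; lra. }
  rewrite E2 in Hcore. rewrite <- E1.
  pose proof (exp_pos (A * alpha)).
  apply TV_le; [|lra|auto].
  assert (0 < (A + alpha) / (A * exp (A * alpha))) by (apply Rdiv_lt_0_compat; nra). lra.
Qed.

End Fixed_level.

Lemma upper_sum_above_lamV_le eps c B h N : 0 < eps -> 0 < c < L -> 0 < B -> 0 < h < lamV V c ->
  exp ((TV V eps + 2 * B / lamV V c) * h) <= 2 ->
  cell_sum (upper_cell V (TV V eps + 2 * B / lamV V c)) (grid (lamV V c - h) h) N
    <= 2 * eps * exp (- B).
Proof.
  intros He Hc HB Hh Hth. destruct (TV_spec eps He) as [HT0 [HT _]].
  set (T := TV V eps) in *. set (l := lamV V c) in *. set (t := T + 2 * B / l) in *.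
  set (m := l - h).
  assert (Hs : 0 <= 2 * B / l) by (apply Rdiv_le_0_compat; lra).
  pose proof (partition_grid m h N ltac:(lra)) as Hp.
  pose proof (grid_upper_sum_le_lower_sum V V_mono T (2 * B / l) m h N HT0 Hs
                ltac:(unfold m; lra) ltac:(lra)) as Hg.
  fold t in Hg. replace (2 * B / l * (m + h)) with (2 * B) in Hg by (unfold m; field; lra).
  pose proof (LapV_ge_lower_sum T HT0 m _ N (grid m h) ltac:(unfold m; lra) Hp).
  pose proof (lower_sum_nonneg V V_mono T m _ N (grid m h) ltac:(unfold m; lra) Hp).
  pose proof (exp_le_compat (- (2 * B)) (- B) ltac:(lra)).
  pose proof (exp_pos (t * h)). pose proof (exp_pos (- (2 * B))).
  assert (exp (t * h) * exp (- (2 * B)) <= 2 * exp (- B)) by nra.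
  nra.
Qed.

Lemma upper_cell_below_lamV_le c1 c2 T t h : 0 < c1 < L -> 0 < c2 < L -> 0 <= T <= t ->
  0 < h < Rmin (lamV V c1) (lamV V c2) ->
  upper_cell V t (Rmin (lamV V c1) (lamV V c2) - h) (lamV V c2 - h)
    <= exp (T * h) * exp (- (T * lamV V c1)) * c2.
Proof.
  intros Hc1 Hc2 HT Hh. pose proof (lamV_pos c1 Hc1). pose proof (lamV_pos c2 Hc2).
  pose proof (Rmin_l (lamV V c1) (lamV V c2)). pose proof (Rmin_r (lamV V c1) (lamV V c2)).
  set (l1 := lamV V c1) in *. set (l2 := lamV V c2) in *.
  pose proof (exp_pos (T * h)). pose proof (exp_pos (- (T * l1))).
  unfold upper_cell. destruct (Rle_or_lt l1 l2) as [Hle|Hlt].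
  - rewrite Rmin_left by lra.
    assert (exp (- (t * (l1 - h))) <= exp (T * h) * exp (- (T * l1))).
    { rewrite <- exp_plus. apply exp_le_compat. nra. }
    pose proof (V_le_of_lt_lamV c2 Hc2 (l2 - h) ltac:(unfold l2 in *; lra)).
    pose proof (V_nonneg (l1 - h) ltac:(lra)). pose proof (V_mono (l1 - h) (l2 - h) ltac:(lra) ltac:(lra)).
    pose proof (exp_pos (- (t * (l1 - h)))). nra.
  - rewrite Rmin_right, Rminus_diag, Rmult_0_r by lra.
    apply Rmult_le_pos; [apply Rmult_le_pos|]; lra.
Qed.

Lemma TV_shift_le eps c1 c2 B : 0 < eps -> 0 < c1 < L -> 0 < c2 < L -> 0 < B ->
  TV V (c1 + c2 * exp (- (TV V eps * lamV V c1)) + 2 * eps * exp (- B))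
    <= TV V eps + 2 * B / lamV V c2.
Proof.
  intros He Hc1 Hc2 HB.
  pose proof (lamV_pos c1 Hc1) as Hl1. pose proof (lamV_pos c2 Hc2) as Hl2.
  pose proof (Rmin_pos _ _ Hl1 Hl2). pose proof (Rmin_l (lamV V c1) (lamV V c2)).
  pose proof (Rmin_r (lamV V c1) (lamV V c2)).
  destruct (TV_spec eps He) as [HT0 _].
  set (T := TV V eps) in *. set (l1 := lamV V c1) in *. set (l2 := lamV V c2) in *.
  assert (Hs : 0 < 2 * B / l2) by (apply Rdiv_lt_0_compat; lra).
  set (t := T + 2 * B / l2).
  pose proof (exp_pos (- (T * l1))). pose proof (exp_pos (- B)).
  apply TV_le; [nra|unfold t; lra|]. apply Rle_plus_epsilon. intros e He'.
  set (kap := Rmin 1 (e / (3 * (c2 + 1)))).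
  assert (Hkap : 0 < kap) by (apply Rmin_pos; [lra|apply Rdiv_lt_0_compat; lra]).
  pose proof (Rmin_l 1 (e / (3 * (c2 + 1)))) as Hk1. pose proof (Rmin_r 1 (e / (3 * (c2 + 1)))) as Hk2.
  fold kap in Hk1, Hk2.
  destruct (exists_step_exp_le t kap (Rmin l1 l2 / 2) ltac:(unfold t; lra) Hkap ltac:(lra))
    as [h [[Hh Hhl] Heh]].
  set (m1 := Rmin l1 l2 - h). set (m2 := l2 - h).
  assert (Hm1 : 0 < m1) by (unfold m1; lra).
  destruct (exists_large_V (e / 3) l2 ltac:(lra)) as [b0 [Hb0 Hb0']].
  destruct (INR_mul_unbounded m2 h b0 Hh) as [N HN]. fold (grid m2 h N) in HN.
  set (b := grid m2 h N) in HN. pose proof (V_mono b0 b ltac:(lra) ltac:(lra)).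
  assert (Hp : partition m1 b (1 + N) (join (two_point m1 m2) 1 (grid m2 h))).
  { eapply partition_join; [apply partition_two_point; unfold m1, m2; lra|].
    apply partition_grid; lra. }
  pose proof (LapV_le_upper_sum t ltac:(unfold t; lra) m1 b _ _ Hm1 Hp) as HU.
  rewrite cell_sum_join, cell_sum_two_point in HU by (rewrite grid_O; reflexivity).
  pose proof (V_le_of_lt_lamV c1 Hc1 m1 ltac:(unfold m1, l1 in *; lra)) as HVm1.
  pose proof (upper_cell_below_lamV_le c1 c2 T t h Hc1 Hc2 ltac:(unfold t; lra)
                ltac:(unfold l1, l2 in *; lra)) as Hmid.
  pose proof (upper_sum_above_lamV_le eps c2 B h N He Hc2 HB ltac:(unfold l1, l2 in *; lra)
                ltac:(fold T l2 t; lra)) as Hgrid.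
  fold T l2 t m2 in Hgrid.
  assert (HTh : exp (T * h) <= 1 + kap)
    by (eapply Rle_trans; [|exact Heh]; apply exp_le_compat; unfold t; nra).
  assert (Hkc : kap * c2 <= e / 3).
  { apply Rle_trans with (e / (3 * (c2 + 1)) * c2); [apply Rmult_le_compat_r; lra|].
    replace (e / (3 * (c2 + 1)) * c2) with (e / 3 * (c2 / (c2 + 1))) by (field; lra).
    pose proof (div_add_1_bounds c2 ltac:(lra)). nra. }
  pose proof (exp_opp_le_1 (T * l1) ltac:(nra)).
  assert (Hw : 0 <= exp (- (T * l1)) * c2 <= c2) by nra.
  assert (exp (T * h) * exp (- (T * l1)) * c2 <= exp (- (T * l1)) * c2 + kap * c2) by nra.
  fold l1 l2 in Hmid. fold m1 m2 in Hmid. lra.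
Qed.

Lemma one_le_six_div_sq_sub_1 d : 0 < d < / 2 -> 1 <= 6 / d ^ 2 - 1.
Proof.
  intros Hd. assert (Hd2 : 0 < d ^ 2) by (simpl; nra).
  assert (6 / d ^ 2 * d ^ 2 = 6) by (field; lra). simpl in *. nra.
Qed.

Lemma six_div_sq_tail_le d z : 0 < d < / 2 -> 2 * d / 5 <= z ->
  let K := 6 / d ^ 2 - 1 in (K + 1) / K * / exp (K * z) <= d / 2.
Proof.
  intros Hd Hz K.
  assert (Hd2 : 0 < d ^ 2) by (simpl; nra).
  assert (HKd : (K + 1) * d ^ 2 = 6) by (unfold K; field; lra).
  pose proof (one_le_six_div_sq_sub_1 d Hd) as HK. fold K in HK.
  assert (Hz' : 2 / d <= K * z).
  { apply Rle_trans with (K * (2 * d / 5)); [|apply Rmult_le_compat_l; lra].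
    apply (Rmult_le_reg_r d); [lra|]. replace (2 / d * d) with 2 by (field; lra). simpl in HKd. nra. }
  assert (Hexp : 4 / d <= exp (K * z)).
  { apply Rle_trans with (exp (2 / d)); [|apply exp_le_compat; auto].
    replace (2 / d) with (/ d + / d) by (field; lra). rewrite exp_plus.
    pose proof (exp_ineq1_le (/ d)).
    assert (2 < / d) by (apply (Rmult_lt_reg_r d); [lra|]; rewrite Rinv_l by lra; lra).
    replace (4 / d) with (4 * / d) by (unfold Rdiv; ring). nra. }
  assert (HKK : (K + 1) / K <= 2).
  { apply (Rmult_le_reg_r K); [lra|]. replace ((K + 1) / K * K) with (K + 1) by (field; lra). lra. }
  pose proof (exp_pos (K * z)).
  assert (/ exp (K * z) <= d / 4).
  { replace (d / 4) with (/ (4 / d)) by (field; lra). apply Rinv_le_contravar; auto.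
    apply Rdiv_lt_0_compat; lra. }
  assert (0 <= (K + 1) / K) by (apply Rdiv_le_0_compat; lra).
  assert (0 <= / exp (K * z)) by (apply Rlt_le, Rinv_0_lt_compat; auto).
  nra.
Qed.

Lemma TV_le_tauV_half d : 0 < d < / 2 -> d / 2 < L -> TV V d <= 6 / d ^ 2 * tauV V (d / 2).
Proof.
  intros Hd HdL. set (c := d / 2). assert (Hc : 0 < c < L) by (unfold c; lra).
  pose proof (tauV_pos c Hc) as Htau. pose proof (lamV_pos c Hc) as Hlam.
  pose proof (ln_1_add_le_tauV_mul_lamV c Hc) as Htl.
  set (tau := tauV V c) in *. set (lam := lamV V c) in *.
  set (alpha := sqrt (tau * lam)).
  assert (Hal : 0 < alpha) by (apply sqrt_lt_R0; nra).
  assert (Hal2 : alpha * alpha = tau * lam) by (apply sqrt_sqrt; nra).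
  assert (Ha2 : 2 * d / 5 <= alpha * alpha).
  { pose proof (div_1_add_le_ln_1_add c ltac:(lra)).
    assert (2 * d / 5 <= c / (1 + c)).
    { apply (Rmult_le_reg_r (1 + c)); [lra|].
      replace (c / (1 + c) * (1 + c)) with c by (field; lra). unfold c. nra. }
    lra. }
  pose proof (six_div_sq_tail_le d (alpha * alpha) Hd Ha2) as Htail. cbv zeta in Htail.
  set (K := 6 / d ^ 2 - 1) in Htail.
  pose proof (one_le_six_div_sq_sub_1 d Hd) as HK. fold K in HK.
  pose proof (TV_le_tauV_scaled c Hc (K * alpha) ltac:(nra)) as H1. cbv zeta in H1.
  fold tau lam alpha in H1.
  replace (tau * (alpha + K * alpha) / alpha) with (6 / d ^ 2 * tau) in H1
    by (unfold K; field; split; lra).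
  replace (K * alpha * alpha) with (K * (alpha * alpha)) in H1 by ring.
  replace ((K * alpha + alpha) / (K * alpha * exp (K * (alpha * alpha))))
    with ((K + 1) / K * / exp (K * (alpha * alpha))) in H1
    by (pose proof (exp_pos (K * (alpha * alpha))); field; split; lra).
  pose proof (exp_pos (K * (alpha * alpha))).
  assert (0 < (K + 1) / K * / exp (K * (alpha * alpha))).
  { apply Rmult_lt_0_compat; [apply Rdiv_lt_0_compat|apply Rinv_0_lt_compat]; lra. }
  eapply Rle_trans; [|exact H1]. apply TV_antitone; unfold c in *; lra.
Qed.

End Laplace.

Theorem proposition2p6 (V : R -> R) (HV : in_classV V)
  (eps c c1 c2 : R)
  (Heps : 0 < eps < LapV V 0) (Hc : 0 < c < LapV V 0)
  (Hc1 : 0 < c1 < LapV V 0) (Hc2 : 0 < c2 < LapV V 0) :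
  let alpha := sqrt (tauV V c * lamV V c) in
  (forall A, 0 < A ->
     alpha / (alpha + A) * TV V (c + (A + alpha) / (A * exp (A * alpha))) <= tauV V c) /\
  tauV V c <= TV V (c / (1 + c)) /\
  (forall B, 0 < B ->
     TV V (c1 + c2 * exp (- (TV V eps * lamV V c1)) + 2 * eps * exp (- B))
       <= TV V eps + 2 * B / lamV V c2) /\
  (forall delta, 0 < delta < / 2 * Rmin (LapV V 0) 1 ->
     tauV V (2 * delta) <= TV V delta /\
     TV V delta <= 6 / delta ^ 2 * tauV V (delta / 2)).
Proof.
  intros alpha. destruct HV as [Hmono [Hrc [Hlim0 [L Hlim]]]].
  pose proof (LapV_le_lim V Hmono Hlim0 L Hlim 0 (Rle_refl 0)) as HL0.
  assert (Hc' : 0 < c < L) by lra.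
  split; [|split; [|split]].
  - intros A HA. pose proof (tauV_pos V Hmono Hlim0 L Hlim Hrc c Hc') as Htau.
    pose proof (lamV_pos V Hlim0 L Hlim c Hc') as Hlam.
    assert (Hal : 0 < alpha) by (apply sqrt_lt_R0; nra).
    pose proof (TV_le_tauV_scaled V Hmono Hlim0 L Hlim Hrc c Hc' A HA) as H. cbv zeta in H. fold alpha in H.
    apply (Rmult_le_compat_l (alpha / (alpha + A))) in H; [|apply Rdiv_le_0_compat; lra].
    replace (alpha / (alpha + A) * (tauV V c * (alpha + A) / alpha)) with (tauV V c) in H
      by (field; lra).
    exact H.
  - exact (tauV_le_TV V Hmono Hlim0 L Hlim Hrc c Hc').
  - intros B HB. apply (TV_shift_le V Hmono Hlim0 L Hlim); lra.
  - intros delta Hd. pose proof (Rmin_l (LapV V 0) 1). pose proof (Rmin_r (LapV V 0) 1).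
    split.
    + eapply Rle_trans; [apply (tauV_le_TV V Hmono Hlim0 L Hlim Hrc (2 * delta)); lra|].
      apply (TV_antitone V Hmono Hlim0 L Hlim); [lra|].
      apply (Rmult_le_reg_r (1 + 2 * delta)); [lra|].
      replace (2 * delta / (1 + 2 * delta) * (1 + 2 * delta)) with (2 * delta) by (field; lra). nra.
    + apply (TV_le_tauV_half V Hmono Hlim0 L Hlim Hrc); lra.
Qed.
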